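(* Let $\{x^k\}$ be generated by the MPG algorithm described in the context. Then for every $j=1,\ldots,m$ the sequence $\{F_j(x^k)\}$ is non-increasing, i.e., $F(x^{k+1})\preceq F(x^k)$ for every $k$ for which $x^{k+1}$ is generated.
   Context: Let $F:\mathbb{R}^n\to(\mathbb{R}\cup\{+\infty\})^m$, $F=(F_1,\ldots,F_m)$, with $F_j=G_j+H_j$ for $j=1,\ldots,m$, where: (i) each $G_j:\mathbb{R}^n\to\mathbb{R}$ is continuously differentiable and convex; (ii) each $H_j:\mathbb{R}^n\to\mathbb{R}\cup\{+\infty\}$ is proper, convex and continuous on its domain; (iii) $\mathrm{dom}(F):=\{x: F_j(x)<+\infty\ \forall j\}$ is nonempty and closed. For $u,v\in\mathbb{R}^m$, $u\preceq v$ means $u_j\le v_j$ for all $j$. For $x\in\mathrm{dom}(F)$ and $\alpha>0$ define $\psi_x(u):=\max_{j=1,\ldots,m}\big(\nabla G_j(x)^\top(u-x)+H_j(u)-H_j(x)\big)$, $p_\alpha(x):=\arg\min_{u\in\mathbb{R}^n}\psi_x(u)+\frac{1}{2\alpha}\|u-x\|^2$ (unique minimizer), and $\theta_\alpha(x):=\psi_x(p_\alpha(x))+\frac{1}{2\alpha}\|p_\alpha(x)-x\|^2$. MPG algorithm. Step 0: choose $x^0\in\mathrm{dom}(F)$, $\alpha>0$, $\gamma\in(0,2/\alpha)$, $0<\tau_1<\tau_2<1$; set $k=0$. Step 1: compute $p^k:=p_\alpha(x^k)$ and $\theta_\alpha(x^k)$. Step 2: if $\theta_\alpha(x^k)=0$,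 stop. Step 3: set $d^k:=p^k-x^k$, take $j_k^*\in\arg\max_{j}\nabla G_j(x^k)^\top d^k$, set $t=1$. Step 3.1: if $G_{j_k^*}(x^k+td^k)\le G_{j_k^*}(x^k)+t\nabla G_{j_k^*}(x^k)^\top d^k+t\frac{\gamma}{2}\|d^k\|^2$, go to Step 3.2; otherwise replace $t$ by some value in $[\tau_1 t,\tau_2 t]$ and repeat Step 3.1. Step 3.2: if $F(x^k+td^k)\preceq F(x^k)$, set $t_k=t$ and go to Step 4. Step 3.3: replace $t$ by some value in $[\tau_1 t,\tau_2 t]$; if $G_j(x^k+td^k)\le G_j(x^k)+t\nabla G_j(x^k)^\top d^k+t\frac{\gamma}{2}\|d^k\|^2$ for all $j=1,\ldots,m$, set $t_k=t$ and go to Step 4; otherwise repeat Step 3.3. Step 4: $x^{k+1}:=x^k+t_kd^k$, $k\leftarrow k+1$, go to Step 1. *)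

From HB Require Import structures.
From mathcomp Require Import all_boot all_order all_algebra.
From mathcomp Require Import all_classical all_reals all_analysis.
Set Implicit Arguments. Unset Strict Implicit. Unset Printing Implicit Defensive.
Import Order.TTheory GRing.Theory Num.Theory.
Import numFieldNormedType.Exports.
Local Open Scope classical_set_scope.
Local Open Scope ring_scope.

Section MPG.
Variable R : realType.
Variables n m : nat.

Definition dotv (u v : 'rV[R]_n) : R := (u *m v^T) 0 0.
Definition norm2 (v : 'rV[R]_n) : R := dotv v v.

Definition convex_fun (f : 'rV[R]_n -> R) : Prop :=
  forall x y (t : R), 0 <= t <= 1 ->
    f (t *: x + (1 - t) *: y) <= t * f x + (1 - t) * f y.

Definition convex_efun (f : 'rV[R]_n -> \bar R) : Prop :=
  forall x y (t : R), 0 <= t <= 1 ->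
    (f (t *: x + (1 - t) *: y)%R <= t%:E * f x + (1 - t)%:E * f y)%E.

Definition proper_efun (f : 'rV[R]_n -> \bar R) : Prop :=
  (forall x, f x != -oo%E) /\ exists x, (f x < +oo)%E.

Definition edom (f : 'rV[R]_n -> \bar R) : set 'rV[R]_n := [set x | (f x < +oo)%E].

Variables (G : 'I_m -> 'rV[R]_n -> R) (gradG : 'I_m -> 'rV[R]_n -> 'rV[R]_n)
          (H : 'I_m -> 'rV[R]_n -> \bar R).

Definition Fj (j : 'I_m) (x : 'rV[R]_n) : \bar R := ((G j x)%:E + H j x)%E.

Definition domF : set 'rV[R]_n := [set x | forall j, (Fj j x < +oo)%E].

Definition Fle (u v : 'rV[R]_n) : Prop := forall j, (Fj j u <= Fj j v)%E.

Definition psi (x u : 'rV[R]_n) : \bar R :=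
  (\big[Order.max/-oo]_(j < m) ((dotv (gradG j x) (u - x))%R%:E + H j u - H j x))%E.

Definition prox_obj (alpha : R) (x u : 'rV[R]_n) : \bar R :=
  (psi x u + (1 / (2 * alpha) * norm2 (u - x))%R%:E)%E.

Definition is_prox (alpha : R) (x p : 'rV[R]_n) : Prop :=
  forall u, (prox_obj alpha x p <= prox_obj alpha x u)%E.

(* theta_alpha(x), given p = p_alpha(x) *)
Definition theta (alpha : R) (x p : 'rV[R]_n) : \bar R := prox_obj alpha x p.

Variables (gamma tau1 tau2 : R).

Definition armijo (j : 'I_m) (x d : 'rV[R]_n) (t : R) : Prop :=
  G j (x + t *: d) <= G j x + t * dotv (gradG j x) d + t * (gamma / 2) * norm2 d.

(* Step 3.3 loop, started from current t; result tk *)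
Inductive ls33 (x d : 'rV[R]_n) : R -> R -> Prop :=
| ls33_stop t t' : tau1 * t <= t' <= tau2 * t -> (forall j, armijo j x d t') ->
    ls33 x d t t'
| ls33_cont t t' tk : tau1 * t <= t' <= tau2 * t -> ~ (forall j, armijo j x d t') ->
    ls33 x d t' tk -> ls33 x d t tk.

(* Step 3.2 at current t; result tk *)
Definition ls32 (x d : 'rV[R]_n) (t tk : R) : Prop :=
  (Fle (x + t *: d) x /\ tk = t) \/ (~ Fle (x + t *: d) x /\ ls33 x d t tk).

(* Step 3.1 loop with index js at current t; result tk *)
Inductive ls31 (js : 'I_m) (x d : 'rV[R]_n) : R -> R -> Prop :=
| ls31_ok t tk : armijo js x d t -> ls32 x d t tk -> ls31 js x d t tk
| ls31_back t t' tk : ~ armijo js x d t -> tau1 * t <= t' <= tau2 * t ->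
    ls31 js x d t' tk -> ls31 js x d t tk.

(* One iteration of MPG (Steps 1-4) from x producing x', when the algorithm
   does not stop at Step 2. *)
Definition mpg_step (alpha : R) (x x' : 'rV[R]_n) : Prop :=
  exists p, is_prox alpha x p /\ theta alpha x p != 0%E /\
  let d := p - x in
  exists js : 'I_m, (forall j, dotv (gradG j x) d <= dotv (gradG js x) d) /\
  exists tk, ls31 js x d 1 tk /\ x' = x + tk *: d.

Definition mpg_generated (alpha : R) (x : nat -> 'rV[R]_n) (K : nat) : Prop :=
  domF (x 0%N) /\ forall k, (k < K)%N -> mpg_step alpha (x k) (x k.+1).

End MPG.

From HB Require Import structures.
From mathcomp Require Import all_boot all_order all_algebra.
From mathcomp Require Import all_classical all_reals all_analysis.
From mathcomp Require Import ring lra.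
Set Implicit Arguments.
Unset Strict Implicit.
Unset Printing Implicit Defensive.

Import Order.TTheory GRing.Theory Num.Theory.
Import numFieldNormedType.Exports.
Local Open Scope classical_set_scope.
Local Open Scope ring_scope.

(* Descent comes from the proximal step alone.  Since psi_x(x) = 0 and the
   prox objective u |-> psi_x(u) + ||u - x||^2 / (2 alpha) is
   (1/alpha)-strongly convex, its minimizer p satisfies
   psi_x(p) <= -||d||^2 / alpha with d = p - x.  Every exit of the line search
   either checks F(x + t d) <= F(x) directly (Step 3.2) or provides t in
   (0, 1] passing the sufficient-decrease test for every j (Step 3.3).  In the
   latter case convexity of H_j gives
   F_j(x + t d) - F_j(x) <= t (psi_x(p) + gamma/2 ||d||^2)
                        <= t (gamma/2 - 1/alpha) ||d||^2 <= 0.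
   Induction on k keeps every iterate in dom F. *)

Lemma ler_of_forall_slack (R : realFieldType) (a b y : R) : 0 <= a ->
  (forall e, 0 < e < 1 -> y <= b + a * e) -> y <= b.
Proof.
move=> a_ge0 hy; apply/ler_addgt0Pr => e e_gt0.
have den_gt0 : 0 < a + e + 1 by lra.
set s := e / (a + e + 1).
have s_def : s * (a + e + 1) = e by rewrite mulfVK ?gt_eqF.
have s_gt0 : 0 < s by rewrite divr_gt0.
have s_lt1 : s < 1 by rewrite ltr_pdivrMr // mul1r; lra.
have := hy s; rewrite s_gt0 s_lt1 => /(_ isT).
nra.
Qed.

Lemma add_scale_sub (R : pzRingType) (V : lmodType R) (x y : V) (t : R) :
  x + t *: (y - x) = t *: y + (1 - t) *: x.
Proof. by rewrite scalerBr scalerBl scale1r addrCA. Qed.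

Section RowAlgebra.
Variables (R : realType) (n : nat).
Implicit Types (u v : 'rV[R]_n).

Lemma dotvC u v : dotv u v = dotv v u.
Proof. by rewrite /dotv -[u *m v^T]trmxK trmx_mul trmxK mxE. Qed.

Lemma dotvZ u v (k : R) : dotv u (k *: v) = k * dotv u v.
Proof. by rewrite /dotv linearZ /= -scalemxAr mxE. Qed.

Lemma dotv0 u : dotv u 0 = 0.
Proof. by rewrite /dotv trmx0 mulmx0 mxE. Qed.

Lemma norm2Z v (k : R) : norm2 (k *: v) = k ^+ 2 * norm2 v.
Proof. by rewrite /norm2 dotvZ dotvC dotvZ mulrA -expr2. Qed.

Lemma norm2_ge0 v : 0 <= norm2 v.
Proof.
rewrite /norm2 /dotv mxE; apply: sumr_ge0 => i _.
by rewrite mxE -expr2 sqr_ge0.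
Qed.

End RowAlgebra.

Section ExtendedConvexity.
Variables (R : realType) (n : nat) (f : 'rV[R]_n -> \bar R).
Hypothesis f_proper : proper_efun f.

Lemma proper_fin_num x : (f x < +oo)%E -> f x \is a fin_num.
Proof. by rewrite fin_numE f_proper.1 => /lt_eqF ->. Qed.

Hypothesis f_convex : convex_efun f.

Lemma convex_efun_fin_num x y t : f x \is a fin_num -> f y \is a fin_num ->
  0 <= t <= 1 ->
  f (t *: x + (1 - t) *: y) \is a fin_num /\
  fine (f (t *: x + (1 - t) *: y)) <= t * fine (f x) + (1 - t) * fine (f y).
Proof.
move=> fx fy t01; have hle := @f_convex x y t t01.
rewrite -(fineK fx) -(fineK fy) -!EFinM -EFinD in hle.
have fz : f (t *: x + (1 - t) *: y) \is a fin_num.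
  by apply: proper_fin_num; exact: le_lt_trans hle (ltry _).
by split => //; rewrite -lee_fin fineK.
Qed.

End ExtendedConvexity.

Section ProximalDescent.
Variables (R : realType) (n m : nat).
Variables (G : 'I_m -> 'rV[R]_n -> R) (gradG : 'I_m -> 'rV[R]_n -> 'rV[R]_n)
  (H : 'I_m -> 'rV[R]_n -> \bar R).
Hypothesis H_proper : forall j, proper_efun (H j).
Hypothesis H_convex : forall j, convex_efun (H j).
Variable x : 'rV[R]_n.
Hypothesis x_dom : domF G H x.

Lemma domF_fin_num j : H j x \is a fin_num.
Proof.
apply: proper_fin_num => //; have := x_dom j.
by rewrite /Fj; case: (H j x) => // r _; exact: ltry.
Qed.

Lemma le_psi j u :
  ((dotv (gradG j x) (u - x))%:E + H j u - H j x <= psi gradG H x u)%E.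
Proof.
exact: (le_bigmax _ (fun i => (dotv (gradG i x) (u - x))%:E + H i u - H i x)%E).
Qed.

Lemma psi_self_le0 : (psi gradG H x x <= 0)%E.
Proof.
apply: bigmax_le => // j _.
by rewrite subrr dotv0 add0e -(fineK (domF_fin_num j)) -EFinB subrr.
Qed.

Lemma psi_fin_num u j : (psi gradG H x u < +oo)%E -> H j u \is a fin_num.
Proof.
move=> /(le_lt_trans (le_psi j u)) hlt; apply: proper_fin_num => //.
move: hlt; rewrite -(fineK (domF_fin_num j)).
by case: (H j u) => // r _; exact: ltry.
Qed.

Lemma psi_segment_le p P s : psi gradG H x p = P%:E -> 0 <= s <= 1 ->
  (psi gradG H x (x + s *: (p - x)) <= (s * P)%:E)%E.
Proof.
move=> psi_p /[dup] s01 /andP[s_ge0 _].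
apply: bigmax_le => [|j _]; first exact: leNye.
have hx := domF_fin_num j.
have hp : H j p \is a fin_num by apply: psi_fin_num; rewrite psi_p ltry.
have [hu hconv] := convex_efun_fin_num (H_proper j) (H_convex j) hp hx s01.
rewrite -add_scale_sub in hu hconv.
have hterm := le_psi j p.
rewrite psi_p -(fineK hx) -(fineK hp) -EFinD lee_fin in hterm.
have -> : x + s *: (p - x) - x = s *: (p - x) by rewrite addrAC subrr add0r.
rewrite dotvZ -(fineK hu) -(fineK hx) -EFinD lee_fin.
have := ler_wpM2l s_ge0 hterm.
lra.
Qed.

Variable alpha : R.
Hypothesis alpha_gt0 : 0 < alpha.

Lemma prox_psi_le p : is_prox gradG H alpha x p ->
  (psi gradG H x p <= (- (alpha^-1 * norm2 (p - x)))%:E)%E.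
Proof.
move=> p_prox; set D := norm2 (p - x); set c := 1 / (2 * alpha).
have c_ge0 : 0 <= c by rewrite divr_ge0 // mulr_ge0 // ltW.
have D_ge0 : 0 <= D := norm2_ge0 _.
have obj_p : (psi gradG H x p + (c * D)%:E <= 0)%E.
  apply: le_trans (p_prox x) _.
  by rewrite /prox_obj subrr /norm2 dotv0 mulr0 adde0 psi_self_le0.
case psi_p : (psi gradG H x p) obj_p => [P| |] obj_p; last exact: leNye.
- rewrite lee_fin.
  have obj_segment s : 0 <= s <= 1 -> P + c * D <= s * P + c * (s ^+ 2 * D).
    move=> s01; have := p_prox (x + s *: (p - x)); rewrite /prox_obj psi_p.
    have -> : x + s *: (p - x) - x = s *: (p - x) by rewrite addrAC subrr add0r.
    rewrite norm2Z -/D.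
    move/le_trans => /(_ _ (leeD2r _ (psi_segment_le psi_p s01))).
    by rewrite -!EFinD lee_fin.
  apply: (ler_of_forall_slack (a := c * D)) => [|e /andP[e_gt0 e_lt1]].
    exact: mulr_ge0.
  (* with s = 1 - e, obj_segment reads e P <= c D (e^2 - 2 e) *)
  have := obj_segment (1 - e); rewrite subr_ge0 (ltW e_lt1) lerBlDr lerDl (ltW e_gt0).
  have alpha_c : alpha^-1 = 2 * c by rewrite /c; field; rewrite gt_eqF.
  rewrite alpha_c => /(_ isT).
  nra.
- by move: obj_p; rewrite /=.
Qed.

Variable gamma : R.
Hypothesis gamma_le : gamma <= 2 / alpha.

Lemma armijo_Fle p t : is_prox gradG H alpha x p -> 0 <= t <= 1 ->
  (forall j, armijo G gradG gamma j x (p - x) t) -> Fle G H (x + t *: (p - x)) x.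
Proof.
move=> p_prox /[dup] t01 /andP[t_ge0 _] armijo_t j; set d := p - x.
have hx := domF_fin_num j.
have psi_p := prox_psi_le p_prox.
have hp : H j p \is a fin_num.
  by apply: psi_fin_num; exact: le_lt_trans psi_p (ltry _).
have [hu hconv] := convex_efun_fin_num (H_proper j) (H_convex j) hp hx t01.
rewrite -add_scale_sub -/d in hu hconv.
have hterm := le_trans (le_psi j p) psi_p.
rewrite -(fineK hx) -(fineK hp) -EFinD lee_fin -/d in hterm.
have := armijo_t j; rewrite /armijo => hG.
rewrite /Fj -(fineK hu) -(fineK hx) -!EFinD lee_fin.
have D_ge0 := norm2_ge0 d.
have gamma_alpha : gamma / 2 <= alpha^-1.
  by rewrite ler_pdivrMr // mulrC.
have := ler_wpM2l t_ge0 hterm.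
have := ler_wpM2l t_ge0 (ler_wpM2r D_ge0 gamma_alpha).
lra.
Qed.

End ProximalDescent.

Section LineSearch.
Variables (R : realType) (n m : nat).
Variables (G : 'I_m -> 'rV[R]_n -> R) (gradG : 'I_m -> 'rV[R]_n -> 'rV[R]_n)
  (H : 'I_m -> 'rV[R]_n -> \bar R) (gamma tau1 tau2 : R).
Hypotheses (tau1_ge0 : 0 <= tau1) (tau2_le1 : tau2 <= 1).

Lemma backtrack_unit t t' : tau1 * t <= t' <= tau2 * t -> 0 <= t <= 1 ->
  0 <= t' <= 1.
Proof.
move=> /andP[t'_ge t'_le] /andP[t_ge0 t_le1]; apply/andP; split.
- exact: le_trans (mulr_ge0 tau1_ge0 t_ge0) t'_ge.
- exact: le_trans t'_le (le_trans (ler_piMl t_ge0 tau2_le1) t_le1).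
Qed.

Lemma ls33_armijo x d t tk : ls33 G gradG gamma tau1 tau2 x d t tk ->
  0 <= t <= 1 -> 0 <= tk <= 1 /\ forall j, armijo G gradG gamma j x d tk.
Proof.
elim=> {t tk} [t t' t'_bt armijo_t' | t t' tk t'_bt _ _ IH] t01.
- by split=> //; exact: backtrack_unit t'_bt t01.
- exact/IH/(backtrack_unit t'_bt t01).
Qed.

Lemma ls31_exit js x d t tk : ls31 G gradG H gamma tau1 tau2 js x d t tk ->
  0 <= t <= 1 ->
  Fle G H (x + tk *: d) x \/
  (0 <= tk <= 1 /\ forall j, armijo G gradG gamma j x d tk).
Proof.
elim=> {t tk} [t tk _ [[F_le ->] | [_ ls33_t]] | t t' tk _ t'_bt _ IH] t01.
- by left.
- by right; exact: ls33_armijo ls33_t t01.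
- exact/IH/(backtrack_unit t'_bt t01).
Qed.

End LineSearch.

Lemma mpg_step_Fle (R : realType) (n m : nat) (G : 'I_m -> 'rV[R]_n -> R)
  (gradG : 'I_m -> 'rV[R]_n -> 'rV[R]_n) (H : 'I_m -> 'rV[R]_n -> \bar R)
  (alpha gamma tau1 tau2 : R) (x x' : 'rV[R]_n) :
  (forall j, proper_efun (H j)) -> (forall j, convex_efun (H j)) ->
  0 < alpha -> gamma <= 2 / alpha -> 0 <= tau1 -> tau2 <= 1 ->
  domF G H x -> mpg_step G gradG H gamma tau1 tau2 alpha x x' -> Fle G H x' x.
Proof.
move=> H_proper H_convex alpha_gt0 gamma_le tau1_ge0 tau2_le1 x_dom.
move=> [p [p_prox [_ [js [_ [tk [ls31_tk ->]]]]]]].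
have := ls31_exit tau1_ge0 tau2_le1 ls31_tk.
rewrite ler01 lexx => /(_ isT) [//|[tk01 armijo_tk]].
exact: (armijo_Fle H_proper H_convex x_dom alpha_gt0 gamma_le p_prox tk01 armijo_tk).
Qed.

Lemma Fle_domF (R : realType) (n m : nat) (G : 'I_m -> 'rV[R]_n -> R)
  (H : 'I_m -> 'rV[R]_n -> \bar R) (x y : 'rV[R]_n) :
  Fle G H y x -> domF G H x -> domF G H y.
Proof. by move=> y_le x_dom j; exact: le_lt_trans (y_le j) (x_dom j). Qed.

Theorem mainTheorem3 (R : realType) (n m : nat)
  (G : 'I_m -> 'rV[R]_n -> R) (gradG : 'I_m -> 'rV[R]_n -> 'rV[R]_n)
  (H : 'I_m -> 'rV[R]_n -> \bar R)
  (* (i) G_j continuously differentiable with gradient gradG j, and convex *)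
  (hGd : forall j x, differentiable (G j) x)
  (hGgrad : forall j x v, 'd (G j) x v = dotv (gradG j x) v)
  (hGc : forall j, continuous (gradG j))
  (hGconv : forall j, convex_fun (G j))
  (* (ii) H_j proper, convex, continuous on its domain *)
  (hHp : forall j, proper_efun (H j))
  (hHconv : forall j, convex_efun (H j))
  (hHc : forall j, {within edom (H j), continuous (fun x => fine (H j x))})
  (* (iii) dom F nonempty and closed *)
  (hdom0 : domF G H !=set0)
  (hdomc : closed (domF G H))
  (* algorithm parameters *)
  (alpha gamma tau1 tau2 : R)
  (halpha : 0 < alpha) (hgamma0 : 0 < gamma) (hgamma1 : gamma < 2 / alpha)
  (htau0 : 0 < tau1) (htau12 : tau1 < tau2) (htau2 : tau2 < 1)
  (x : nat -> 'rV[R]_n) (K : nat)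
  (hgen : mpg_generated G gradG H gamma tau1 tau2 alpha x K) :
  forall k, (k < K)%N -> Fle G H (x k.+1) (x k).
Proof.
case: hgen => x0_dom mpg_steps.
have step_Fle k : (k < K)%N -> domF G H (x k) -> Fle G H (x k.+1) (x k).
  by move=> k_lt xk_dom; apply: mpg_step_Fle hHp hHconv halpha (ltW hgamma1)
    (ltW htau0) (ltW htau2) xk_dom (mpg_steps k k_lt).
have iterates_dom k : (k <= K)%N -> domF G H (x k).
  elim: k => [//|k IH] k_lt.
  exact: Fle_domF (step_Fle k k_lt (IH (ltnW k_lt))) (IH (ltnW k_lt)).
by move=> k k_lt; exact: step_Fle k_lt (iterates_dom k (ltnW k_lt)).
Qed.
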